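(* Let $S_6$ be the simple undirected graph on vertex set $\{1,2,\dots,33\}$ whose edges are the path edges $\{j,j+1\}$ for $j=1,\dots,32$ together with the ten edges $\{1,24\},\{4,9\},\{6,31\},\{7,12\},\{10,15\},\{13,18\},\{16,27\},\{22,33\},\{25,30\},\{28,33\}$. Designate incoming vertices $i_1=1,\ i_2=7,\ i_3=13,\ i_4=19,\ i_5=25,\ i_6=31$ and outgoing vertices $o_1=33,\ o_2=27,\ o_3=3,\ o_4=9,\ o_5=21,\ o_6=15$. Let $G$ be any finite simple undirected graph that contains $S_6$ as an induced subgraph, has at least one vertex not in $S_6$, and is such that every edge of $G$ joining a vertex of $S_6$ to a vertex outside $S_6$ has its endpoint in $S_6$ belonging to $\{i_1,\dots,i_6,o_1,\dots,o_6\}$. Then for every Hamiltonian cycle $H$ of $G$, the edges of $H$ having both endpoints in $S_6$ form a single path that visits every vertex of $S_6$ (i.e. $H$ enters $S_6$ exactly once, traverses all of it, and leaves), and the two endpoints of this path are $i_k$ and $o_k$ for some $k\in\{1,\dots,6\}$.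
   Context: A Hamiltonian cycle of a graph is a cycle passing through every vertex exactly once. This is the ''in-out property'' for the subgraph $S_6$: each copy of it behaves like a single vertex in any Hamiltonian cycle, and a cycle entering at the $k$-th incoming vertex must leave at the $k$-th outgoing vertex. *)

From mathcomp Require Import all_boot.
Set Implicit Arguments. Unset Strict Implicit. Unset Printing Implicit Defensive.

(* Vertices of S_6 are represented by a : 'I_33, with label (val a).+1 in {1..33}. *)
Definition s6_label (a : 'I_33) : nat := (val a).+1.

Definition s6_chords : seq (nat * nat) :=
  [:: (1,24); (4,9); (6,31); (7,12); (10,15); (13,18); (16,27); (22,33);
      (25,30); (28,33)].

Definition s6_adj_nat (x y : nat) : bool :=
  [|| x.+1 == y, y.+1 == x, (x, y) \in s6_chords | (y, x) \in s6_chords].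

Definition s6_adj (a b : 'I_33) : bool := s6_adj_nat (s6_label a) (s6_label b).

Definition s6_in_labels : seq nat := [:: 1; 7; 13; 19; 25; 31].
Definition s6_out_labels : seq nat := [:: 33; 27; 3; 9; 21; 15].
Definition s6_in (k : 'I_6) : nat := nth 0 s6_in_labels k.
Definition s6_out (k : 'I_6) : nat := nth 0 s6_out_labels k.
Definition s6_terminal (a : 'I_33) : bool :=
  (s6_label a \in s6_in_labels) || (s6_label a \in s6_out_labels).

Definition simple_graph (V : finType) (e : rel V) : Prop :=
  symmetric e /\ irreflexive e.

Definition hamiltonian_cycle (V : finType) (e : rel V) (c : seq V) : Prop :=
  [/\ uniq c, forall v, v \in c, 2 < size c & cycle e c].

Definition hc_edge (V : eqType) (c : seq V) (x y : V) : bool :=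
  (x \in c) && ((next c x == y) || (next c y == x)).

Definition path_pairs (T : Type) (p : seq T) : seq (T * T) := zip p (behead p).

From mathcomp Require Import all_boot.
Set Implicit Arguments. Unset Strict Implicit. Unset Printing Implicit Defensive.

(* Restricting a Hamiltonian cycle H to S_6 gives a set of S_6-edges in which
   every vertex has degree at most 2, and every vertex other than the twelve
   terminals has degree exactly 2, since both of its H-neighbours lie in S_6.
   A branch-and-bound enumeration over the 42 edges of S_6, pruning as soon as
   a vertex whose edges are all decided violates these degree constraints,
   shows that such an edge set is either one of the six Hamiltonian
   i_k-o_k paths of S_6 or contains a cycle made of degree-2 vertices.  The
   latter is impossible: that cycle would be closed under the successor map of
   H, hence would be all of H, which also visits a vertex outside S_6. *)

Lemma mask_cat_drop (T : Type) (y z : bitseq) (s : seq T) :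
  mask (y ++ z) s = mask y s ++ mask z (drop (size y) s).
Proof. by elim: y s => [|b y IHy] [|x s] //=; [rewrite mask0 | case: b; rewrite IHy]. Qed.

Lemma count_or_disjoint (T : eqType) (a1 a2 : pred T) (s : seq T) :
  {in s, forall x, ~~ (a1 x && a2 x)} ->
  count (fun x => a1 x || a2 x) s = count a1 s + count a2 s.
Proof.
move=> disj; rewrite -count_predUI (@eq_in_count _ (predI a1 a2) pred0) ?count_pred0 ?addn0 //.
by move=> x /disj /negbTE.
Qed.

Lemma count_pairs_fst (T : eqType) (vs : seq T) (s : seq (T * T)) (P : pred T) v :
  uniq vs -> uniq s -> (forall b, (v, b) \in s -> b \in vs) ->
  count (fun ab => (ab.1 == v) && P ab.2) s = count (fun b => ((v, b) \in s) && P b) vs.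
Proof.
move=> vs_uniq s_uniq s_vs; rewrite -!size_filter -(size_map snd).
apply/perm_size/uniq_perm; last 1 first.
- move=> b; rewrite mem_filter; apply/mapP/andP => [[[a b']] | [/andP[vb Pb] b_in]].
    by rewrite mem_filter /= => /andP[/andP[/eqP-> Pb'] vb'] ->; rewrite vb' Pb' s_vs.
  by exists (v, b); rewrite // mem_filter /= eqxx Pb.
- rewrite map_inj_in_uniq ?filter_uniq // => -[a1 b1] [a2 b2].
  by rewrite !mem_filter /= => /andP[/andP[/eqP-> _] _] /andP[/andP[/eqP-> _] _] ->.
- exact: filter_uniq.
Qed.

Lemma zip_map_pair (T U : Type) (g : T -> U) (s t : seq T) :
  zip (map g s) (map g t) = map (fun ab => (g ab.1, g ab.2)) (zip s t).
Proof. by elim: s t => [|x s IHs] [|y t] //=; rewrite IHs. Qed.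

Lemma card_count_enum (T : finType) (P : pred T) : #|P| = count P (enum T).
Proof. by rewrite enumT cardE /enum_mem size_filter. Qed.

Lemma card_preim (T T' : finType) (f : T -> T') (P : pred T') :
  injective f -> #|[pred x | P (f x)]| = #|[predI P & codom f]|.
Proof.
move=> f_inj; rewrite -(card_image f_inj); apply: eq_card => y; rewrite !inE.
apply/imageP/andP => [[x Px ->] | [Py /codomP[x y_fx]]]; first by rewrite codom_f.
by exists x; rewrite // inE -y_fx.
Qed.

Definition path_rel (T : eqType) (p : seq T) : rel T :=
  fun a b => ((a, b) \in path_pairs p) || ((b, a) \in path_pairs p).

Lemma path_rel_sym (T : eqType) (p : seq T) : symmetric (path_rel p).
Proof. by move=> a b; rewrite /path_rel orbC. Qed.

Lemma path_rel_map (T U : eqType) (g : T -> U) (p : seq T) : injective g ->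
  forall a b, path_rel (map g p) (g a) (g b) = path_rel p a b.
Proof.
move=> g_inj a b; have gg_inj : injective (fun ab : T * T => (g ab.1, g ab.2)).
  by move=> [? ?] [? ?] [/g_inj-> /g_inj->].
by rewrite /path_rel /path_pairs behead_map zip_map_pair !(mem_map gg_inj _ (_, _)).
Qed.

Lemma path_rel_sub (T : eqType) (e : rel T) (p : seq T) : symmetric e ->
  all (fun ab => e ab.1 ab.2) (path_pairs p) -> subrel (path_rel p) e.
Proof. by move=> e_sym /allP p_e a b /orP[] /p_e //=; rewrite e_sym. Qed.

Section BranchAndBound.

Variables (prune leaf : seq bool -> bool).
Hypothesis prune_cat : forall s t, prune s -> prune (s ++ t).

(* [if] rather than [||]: the VM evaluates both arguments of [orb]. *)
Fixpoint search (s : seq bool) (n : nat) : bool :=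
  if prune s then true
  else if n is n'.+1 then search (rcons s false) n' && search (rcons s true) n'
  else leaf s.

Lemma searchP n s t : search s n -> size t = n -> ~~ prune (s ++ t) -> leaf (s ++ t).
Proof.
elim: n s t => [|n IHn] s [|b t] //=; case: ifP => [/prune_cat-> //|_].
- by rewrite cats0.
- move=> /andP[search0 search1] [size_t]; rewrite -cat_rcons.
  by case: b; [apply: IHn search1 _ | apply: IHn search0 _].
Qed.

End BranchAndBound.

Section EdgeSelection.

Variables (T : eqType) (vs : seq T) (es : seq (T * T)) (terminal : pred T).

Definition edge_rel : rel T := fun a b => ((a, b) \in es) || ((b, a) \in es).

Definition selection (E : rel T) : seq bool := [seq E ab.1 ab.2 | ab <- es].

(* A prefix [y] of a bit vector indexed by [es] selects the edges [mask y es];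
   a vertex is [decided] once all its incident edges lie within the prefix. *)
Definition selected (y : seq bool) : rel T :=
  fun a b => ((a, b) \in mask y es) || ((b, a) \in mask y es).

Definition incident (v : T) (ab : T * T) : bool := (ab.1 == v) || (ab.2 == v).

Definition degree (y : seq bool) (v : T) : nat := count (incident v) (mask y es).

Definition decided (y : seq bool) (v : T) : bool := ~~ has (incident v) (drop (size y) es).

Definition degree_ok (y : seq bool) (v : T) : bool :=
  (degree y v <= 2) && (terminal v || (degree y v == 2)).

Definition refuted (y : seq bool) : bool := has (fun v => decided y v && ~~ degree_ok y v) vs.

Definition closed_selection (y : seq bool) (S : seq T) : bool :=
  [&& S != [::], all (fun b => degree y b == 2) S &
      all (fun ab => (ab.1 \in S) == (ab.2 \in S)) (mask y es)].

(* Only a candidate for [closed_selection], which re-checks it. *)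
Fixpoint closed_core (y : seq bool) (n : nat) (S : seq T) : seq T :=
  if n is n'.+1 then
    let S' := [seq b <- S | all (fun ab => incident b ab ==> (ab.1 \in S) && (ab.2 \in S))
                                (mask y es)] in
    if S' == S then S else closed_core y n' S'
  else S.

Definition linkage_leaf (paths : seq (seq T)) (y : seq bool) : bool :=
  (y \in [seq selection (path_rel p) | p <- paths]) ||
  closed_selection y (closed_core y (size vs) [seq b <- vs | degree y b == 2]).

End EdgeSelection.

Section EdgeSelectionTheory.

Variables (T : eqType) (vs : seq T) (es : seq (T * T)) (terminal : pred T).

Lemma decided_cat y z v : decided es y v -> decided es (y ++ z) v.
Proof.
apply: contra => /hasP[ab ab_in incid]; apply/hasP; exists ab => //.
by move: ab_in; rewrite size_cat addnC -drop_drop => /mem_drop.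
Qed.

Lemma degree_cat y z v : decided es y v -> degree es (y ++ z) v = degree es y v.
Proof.
move=> dec_v; rewrite /degree mask_cat_drop count_cat.
suff -> : count (incident v) (mask z (drop (size y) es)) = 0 by rewrite addn0.
apply/eqP; rewrite -leqn0 leqNgt -has_count; apply: contra dec_v.
by case/hasP=> ab /mem_mask ab_in incid; apply/hasP; exists ab.
Qed.

Lemma refuted_cat y z : refuted vs es terminal y -> refuted vs es terminal (y ++ z).
Proof.
case/hasP=> v v_in /andP[dec_v bad_v]; apply/hasP; exists v => //.
by rewrite decided_cat //= /degree_ok degree_cat.
Qed.

Lemma edge_rel_sym : symmetric (edge_rel es).
Proof. by move=> a b; rewrite /edge_rel orbC. Qed.

Lemma mem_mask_selection E ab : (ab \in mask (selection es E) es) = E ab.1 ab.2 && (ab \in es).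
Proof. by rewrite -filter_mask mem_filter. Qed.

Lemma selected_selection E : symmetric E ->
  forall a b, selected es (selection es E) a b = E a b && edge_rel es a b.
Proof. by move=> E_sym a b; rewrite /selected !mem_mask_selection /= (E_sym b a) -andb_orr. Qed.

Lemma closed_selectionP y S b b' :
  closed_selection es y S -> b \in S -> selected es y b b' -> b' \in S.
Proof.
case/and3P=> _ _ /allP closed b_in /orP[] /closed /eqP /=; first by rewrite b_in => <-.
by rewrite b_in => ->.
Qed.

Hypotheses (vs_uniq : uniq vs) (es_uniq : uniq es).
Hypothesis es_oriented : forall a b, (a, b) \in es -> (b, a) \notin es.
Hypothesis es_in_vs : forall a b, (a, b) \in es -> (a \in vs) && (b \in vs).

Lemma degree_selection E v : symmetric E ->
  degree es (selection es E) v = count (fun b => E v b && edge_rel es v b) vs.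
Proof.
move=> E_sym; pose flip (ab : T * T) := (ab.2, ab.1).
have flip_inj : injective flip by move=> [? ?] [? ?] [-> ->].
have mem_flip a b : ((a, b) \in map flip es) = ((b, a) \in es).
  by rewrite -(mem_map flip_inj es (b, a)).
have no_loop a : (a, a) \notin es by apply/negP => /[dup] /es_oriented/negP.
rewrite /degree -filter_mask count_filter.
(* Split the selected edges at [v] by the side [v] is on, then count each half
   by its other endpoint; orientation keeps the two halves disjoint. *)
transitivity (count (fun ab => ((ab.1 == v) && E v ab.2) || ((ab.2 == v) && E v ab.1)) es).
  apply: eq_count => -[a b]; rewrite /= /incident /=.
  by case: (a =P v) => [->|_]; case: (b =P v) => [->|_]; rewrite ?orbb ?orbF ?(E_sym a).
rewrite count_or_disjoint; last first.
  move=> [a b] ab_in; apply/negP => /andP[/andP[/= /eqP av _] /andP[/= /eqP bv _]].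
  by move: ab_in; rewrite /= av bv (negbTE (no_loop v)).
rewrite -[X in _ + X](count_map flip (fun ab => (ab.1 == v) && E v ab.2)).
rewrite !(@count_pairs_fst _ vs) ?(map_inj_uniq flip_inj) //; first last.
- by move=> b; rewrite mem_flip => /es_in_vs/andP[].
- by move=> b /es_in_vs/andP[].
rewrite -count_or_disjoint; last first.
  by move=> b _; rewrite mem_flip; apply/negP => /and3P[/andP[/es_oriented/negP]].
by apply: eq_count => b; rewrite mem_flip -andb_orl andbC.
Qed.

Lemma linkage_cases (paths : seq (seq T)) (E : rel T) :
  search (refuted vs es terminal) (linkage_leaf vs es paths) [::] (size es) ->
  symmetric E -> subrel E (edge_rel es) ->
  {in vs, forall v, (count (E v) vs <= 2) && (terminal v || (count (E v) vs == 2))} ->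
  (exists2 p, p \in paths & forall a b, E a b = path_rel p a b && edge_rel es a b) \/
  (exists2 S : seq T, S != [::] & {in S, forall b, count (E b) vs = 2 /\ {subset E b <= S}}).
Proof.
move=> searched E_sym E_sub E_deg; set y := selection es E.
have deg_y b : degree es y b = count (E b) vs.
  by rewrite degree_selection //; apply: eq_count => b'; case: (boolP (E b b')) => // /E_sub ->.
have sel_y a b : selected es y a b = E a b.
  by rewrite selected_selection //; case: (boolP (E a b)) => // /E_sub ->.
have /orP[/mapP[p p_in y_p] | closed] : linkage_leaf vs es paths y.
  apply: (searchP refuted_cat searched (t := y)); first by rewrite size_map.
  by apply/hasPn => v /E_deg ok; rewrite /degree_ok !deg_y ok andbF.
- left; exists p => // a b; rewrite -sel_y y_p selected_selection //; exact: path_rel_sym.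
- right; set S := closed_core _ _ _ _ in closed; exists S; first by case/and3P: closed.
  move=> b b_in; split; first by case/and3P: closed => _ /allP/(_ b b_in)/eqP; rewrite deg_y.
  by move=> b' Ebb'; apply: closed_selectionP closed b_in _; rewrite sel_y.
Qed.

End EdgeSelectionTheory.

Section HamiltonianCycle.

Variables (V : finType) (e : rel V) (c : seq V).
Hypotheses (e_sym : symmetric e) (c_uniq : uniq c) (c_all : forall v, v \in c).
Hypotheses (c_big : 2 < size c) (c_cycle : cycle e c).

Lemma hc_edgeE x y : hc_edge c x y = (y == next c x) || (y == prev c x).
Proof.
rewrite /hc_edge c_all /= (eq_sym (next c x)); congr orb.
by apply/eqP/eqP => [<-|->]; [rewrite prev_next | rewrite next_prev].
Qed.

Lemma hc_edge_next x : hc_edge c x (next c x).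
Proof. by rewrite hc_edgeE eqxx. Qed.

Lemma hc_edge_sym : symmetric (hc_edge c).
Proof. by move=> x y; rewrite /hc_edge !c_all orbC. Qed.

Lemma hc_edge_sub : subrel (hc_edge c) e.
Proof.
move=> x y; rewrite hc_edgeE => /orP[] /eqP->; first exact: next_cycle.
by rewrite e_sym; apply: prev_cycle.
Qed.

Lemma hc_covers (A : pred V) x : A x -> (forall y, A y -> A (next c y)) -> forall z, A z.
Proof.
move=> Ax A_next z; have: fconnect (next c) x z.
  by rewrite (fconnect_cycle (cycle_next c_uniq) (c_all x)).
by move/iter_findex <-; elim: (findex _ _ _) => //= n; apply: A_next.
Qed.

Lemma next_neq_prev x : next c x != prev c x.
Proof.
apply/eqP => next_prev_x; set z := next c x.
have next_z : next c z = x by rewrite /z next_prev_x next_prev.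
have: {subset c <= [:: x; z]}.
  move=> w _; apply: (@hc_covers (fun w => w \in [:: x; z]) x) => [|y]; first exact: mem_head.
  by rewrite !inE => /orP[] /eqP->; rewrite ?next_z eqxx ?orbT.
by move/(uniq_leq_size c_uniq); rewrite leqNgt c_big.
Qed.

Lemma card_hc_edge x : #|hc_edge c x| = 2.
Proof.
have -> : 2 = (next c x != prev c x).+1 by rewrite next_neq_prev.
by rewrite -card2; apply: eq_card => y; rewrite !inE; apply: hc_edgeE.
Qed.

Variables (T : finType) (f : T -> V).
Hypothesis f_inj : injective f.

Lemma card_relpre_hc_edge a :
  #|relpre f (hc_edge c) a| = #|[predI hc_edge c (f a) & codom f]|.
Proof. by rewrite -card_preim. Qed.

Lemma card_relpre_hc_edge_le a : #|relpre f (hc_edge c) a| <= 2.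
Proof.
rewrite card_relpre_hc_edge -(card_hc_edge (f a)).
by apply/subset_leq_card/subsetP => y /andP[].
Qed.

Lemma card_relpre_hc_edge_eq a :
  {subset hc_edge c (f a) <= codom f} -> #|relpre f (hc_edge c) a| = 2.
Proof.
move=> sub_f; rewrite card_relpre_hc_edge -(card_hc_edge (f a)).
by apply: eq_card => y; rewrite !inE; case: (boolP (y \in hc_edge c (f a))) => [/sub_f->|].
Qed.

Lemma hc_edge_codom a :
  #|relpre f (hc_edge c) a| = 2 -> {subset hc_edge c (f a) <= codom f}.
Proof.
rewrite card_relpre_hc_edge -(card_hc_edge (f a)) => card_eq.
have sub : [predI hc_edge c (f a) & codom f] \subset hc_edge c (f a).
  by apply/subsetP => y /andP[].
have [_] := subset_leqif_card sub; rewrite card_eq eqxx => /esym/subsetP sub_f y.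
by move/sub_f => /andP[].
Qed.

Lemma relpre_hc_edge_closed_surj (A : pred T) a : A a ->
  {in A, forall b, #|relpre f (hc_edge c) b| = 2 /\ {subset relpre f (hc_edge c) b <= A}} ->
  forall v, v \in codom f.
Proof.
move=> Aa closedA; pose B := [pred v | [exists b, A b && (v == f b)]].
suff B_all : forall v, B v.
  by move=> v; have /existsP[b /andP[_ /eqP->]] := B_all v; apply: codom_f.
apply: (@hc_covers B (f a)); first by apply/existsP; exists a; rewrite Aa eqxx.
move=> _ /existsP[b /andP[Ab /eqP->]]; have [deg2 subA] := closedA b Ab.
have /codomP[b' next_b] : next c (f b) \in codom f.
  exact: (hc_edge_codom deg2 (hc_edge_next _)).
apply/existsP; exists b'; rewrite next_b eqxx andbT; apply: subA.
by rewrite inE /= -next_b; apply: hc_edge_next.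
Qed.

End HamiltonianCycle.

(* The enumeration runs on the labels 1..33 of the paper: equality on ['I_33]
   is slow in the VM, and [inord] does not even reduce there. *)
Definition s6_labels : seq nat := iota 1 33.

Definition s6_label_edges : seq (nat * nat) :=
  [seq xy <- [seq (x, y) | x <- s6_labels, y <- s6_labels] | (xy.1 < xy.2) && s6_adj_nat xy.1 xy.2].

Definition s6_is_terminal (x : nat) : bool := (x \in s6_in_labels) || (x \in s6_out_labels).

(* The Hamiltonian i_k-o_k paths of S_6, for k = 3, 4, 2, 6, 5, 1. *)
Definition s6_label_paths : seq (seq nat) :=
  [:: [:: 13; 14; 15; 10; 11; 12; 7; 8; 9; 4; 5; 6; 31; 32; 33; 28; 29;
          30; 25; 26; 27; 16; 17; 18; 19; 20; 21; 22; 23; 24; 1; 2; 3];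
      [:: 19; 20; 21; 22; 23; 24; 1; 2; 3; 4; 5; 6; 31; 32; 33; 28; 29;
          30; 25; 26; 27; 16; 17; 18; 13; 14; 15; 10; 11; 12; 7; 8; 9];
      [:: 7; 8; 9; 10; 11; 12; 13; 14; 15; 16; 17; 18; 19; 20; 21; 22; 23;
          24; 1; 2; 3; 4; 5; 6; 31; 32; 33; 28; 29; 30; 25; 26; 27];
      [:: 31; 32; 33; 28; 29; 30; 25; 26; 27; 16; 17; 18; 19; 20; 21; 22; 23;
          24; 1; 2; 3; 4; 5; 6; 7; 8; 9; 10; 11; 12; 13; 14; 15];
      [:: 25; 26; 27; 28; 29; 30; 31; 32; 33; 22; 23; 24; 1; 2; 3; 4; 5;
          6; 7; 8; 9; 10; 11; 12; 13; 14; 15; 16; 17; 18; 19; 20; 21];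
      [:: 1; 2; 3; 4; 5; 6; 7; 8; 9; 10; 11; 12; 13; 14; 15; 16; 17;
          18; 19; 20; 21; 22; 23; 24; 25; 26; 27; 28; 29; 30; 31; 32; 33]].

Lemma s6_label_edges_uniq : uniq s6_label_edges.
Proof. by vm_compute. Qed.

Lemma s6_label_edges_ordered x y : (x, y) \in s6_label_edges -> x < y.
Proof. by rewrite mem_filter => /andP[/andP[]]. Qed.

Lemma s6_label_edges_oriented x y :
  (x, y) \in s6_label_edges -> (y, x) \notin s6_label_edges.
Proof.
move=> /s6_label_edges_ordered lt_xy; apply/negP => /s6_label_edges_ordered.
by rewrite ltnNge ltnW.
Qed.

Lemma s6_label_edges_labels x y :
  (x, y) \in s6_label_edges -> (x \in s6_labels) && (y \in s6_labels).
Proof.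
rewrite mem_filter => /andP[_ /allpairsP[[x' y'] [/= x_in y_in [-> ->]]]].
by apply/andP.
Qed.

Lemma s6_label_edges_adj x y : x \in s6_labels -> y \in s6_labels ->
  edge_rel s6_label_edges x y = s6_adj_nat x y.
Proof.
have : all (fun x => all (fun y => edge_rel s6_label_edges x y == s6_adj_nat x y) s6_labels)
           s6_labels by vm_compute.
by move=> /allP all_x /all_x /allP all_xy /all_xy /eqP.
Qed.

Lemma s6_search :
  search (refuted s6_labels s6_label_edges s6_is_terminal)
         (linkage_leaf s6_labels s6_label_edges s6_label_paths) [::] (size s6_label_edges).
Proof. by vm_compute. Qed.

Definition s6_label_rel (E : rel 'I_33) : rel nat :=
  fun x y => [&& x \in s6_labels, y \in s6_labels & E (inord x.-1) (inord y.-1)].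

Lemma s6_labelsE : s6_labels = map s6_label (enum 'I_33).
Proof. by rewrite /s6_labels -[1]/(1 + 0) iotaDl -val_enum_ord -map_comp. Qed.

Lemma s6_label_inj : injective s6_label.
Proof. by move=> a b [/val_inj]. Qed.

Lemma s6_labelK a : inord (s6_label a).-1 = a.
Proof. exact: inord_val. Qed.

Lemma s6_labelsP x : x \in s6_labels -> exists a, x = s6_label a.
Proof. by rewrite s6_labelsE => /mapP[a _ ->]; exists a. Qed.

Lemma mem_s6_labels a : s6_label a \in s6_labels.
Proof. by rewrite s6_labelsE map_f ?mem_enum. Qed.

Lemma s6_labels_lift p : {subset p <= s6_labels} -> exists q, p = map s6_label q.
Proof.
move=> p_labels; exists (map (fun x => inord x.-1) p); rewrite -map_comp map_id_in //.
by move=> _ /p_labels /s6_labelsP[a ->] /=; rewrite s6_labelK.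
Qed.

Lemma s6_label_relE E a b : s6_label_rel E (s6_label a) (s6_label b) = E a b.
Proof. by rewrite /s6_label_rel !mem_s6_labels !s6_labelK. Qed.

Lemma s6_label_rel_sym E : symmetric E -> symmetric (s6_label_rel E).
Proof. by move=> E_sym x y; rewrite /s6_label_rel E_sym andbCA. Qed.

Lemma s6_label_rel_sub E : subrel E s6_adj -> subrel (s6_label_rel E) (edge_rel s6_label_edges).
Proof.
move=> E_sub x y /and3P[/s6_labelsP[a ->] /s6_labelsP[b ->]].
by rewrite !s6_labelK => /E_sub; rewrite s6_label_edges_adj ?mem_s6_labels.
Qed.

Lemma s6_label_rel_labels E x y : s6_label_rel E x y -> exists a, x = s6_label a.
Proof. by case/and3P=> /s6_labelsP. Qed.

Lemma count_s6_label_rel E a : count (s6_label_rel E (s6_label a)) s6_labels = #|E a|.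
Proof.
rewrite card_count_enum s6_labelsE count_map.
by apply: eq_count => b /=; rewrite s6_label_relE.
Qed.

Lemma s6_label_pathsP p : p \in s6_label_paths ->
  [/\ uniq p, size p = 33, {subset p <= s6_labels},
      subrel (path_rel p) (edge_rel s6_label_edges) &
      exists k : 'I_6, head 1 p = s6_in k /\ last 1 p = s6_out k].
Proof.
have : all (fun p => [&& uniq p, size p == 33, all (mem s6_labels) p,
                        all (fun ab => edge_rel s6_label_edges ab.1 ab.2) (path_pairs p) &
                        has (fun k => (head 1 p == nth 0 s6_in_labels k) &&
                                      (last 1 p == nth 0 s6_out_labels k)) (iota 0 6)])
            s6_label_paths by vm_compute.
move=> /allP all_p /all_p /and5P[p_uniq /eqP p_size /allP p_labels p_adj].
case/hasP=> k; rewrite mem_iota => /= k_lt /andP[/eqP p_head /eqP p_last].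
split=> //; last by exists (Ordinal k_lt).
exact: path_rel_sub (@edge_rel_sym _ _) p_adj.
Qed.

Lemma s6_linkage (E : rel 'I_33) :
  symmetric E -> subrel E s6_adj ->
  (forall a, #|E a| <= 2) -> (forall a, ~~ s6_terminal a -> #|E a| = 2) ->
  (exists (A : pred 'I_33) a, A a /\ {in A, forall b, #|E b| = 2 /\ {subset E b <= A}}) \/
  (exists p : seq 'I_33, [/\ uniq p, size p = 33, E =2 path_rel p &
     exists k : 'I_6, s6_label (head ord0 p) = s6_in k /\ s6_label (last ord0 p) = s6_out k]).
Proof.
move=> E_sym E_sub E_le E_eq.
have E_deg : {in s6_labels, forall x, (count (s6_label_rel E x) s6_labels <= 2) &&
    (s6_is_terminal x || (count (s6_label_rel E x) s6_labels == 2))}.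
  move=> _ /s6_labelsP[a ->]; rewrite count_s6_label_rel E_le /=.
  by case: (boolP (s6_is_terminal (s6_label a))) => //= /E_eq ->.
have [[p p_in Ep] | [S S_nil S_closed]] :=
  linkage_cases (vs := s6_labels) (iota_uniq 1 33) s6_label_edges_uniq s6_label_edges_oriented
    s6_label_edges_labels s6_search (s6_label_rel_sym E_sym) (s6_label_rel_sub E_sub) E_deg.
  right; have [p_uniq p_size p_labels p_adj [k [p_head p_last]]] := s6_label_pathsP p_in.
  have [q p_q] := s6_labels_lift p_labels; subst p; exists q; split.
  - by rewrite -(map_inj_uniq s6_label_inj).
  - by rewrite -(size_map s6_label).
  - move=> a b; rewrite -s6_label_relE Ep andb_idr; last exact: p_adj.
    by rewrite path_rel_map //; apply: s6_label_inj.
  - exists k; rewrite -p_head -p_last -[1]/(s6_label ord0) last_map.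
    by case: (q).
left; case: S S_nil S_closed => [//|x S] _ S_closed.
have [deg_x _] := S_closed x (mem_head x S).
have [a x_a] : exists a, x = s6_label a.
  have /hasP[y _ /s6_label_rel_labels //] : has (s6_label_rel E x) s6_labels.
  by rewrite has_count deg_x.
exists (fun b => s6_label b \in x :: S), a; split; first by rewrite -x_a mem_head.
move=> b /S_closed[deg_b sub_b]; split; first by rewrite count_s6_label_rel in deg_b.
move=> b' Ebb'; apply: sub_b.
by rewrite -[_ \in _]/(s6_label_rel E (s6_label b) (s6_label b')) s6_label_relE.
Qed.

Theorem mainTheorem2 (V : finType) (e : rel V) (f : 'I_33 -> V) :
  simple_graph e ->
  injective f ->
  (* S_6 is an induced subgraph of G via f *)
  (forall a b : 'I_33, e (f a) (f b) = s6_adj a b) ->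
  (* G has a vertex outside S_6 *)
  (exists v : V, v \notin codom f) ->
  (* edges leaving S_6 only at terminals *)
  (forall (a : 'I_33) (v : V), v \notin codom f -> e (f a) v -> s6_terminal a) ->
  forall c : seq V, hamiltonian_cycle e c ->
  exists p : seq 'I_33,
    [/\ uniq p, size p = 33,
        (forall a b : 'I_33,
           hc_edge c (f a) (f b) = ((a, b) \in path_pairs p) || ((b, a) \in path_pairs p))
      & exists k : 'I_6,
          s6_label (head ord0 p) = s6_in k /\ s6_label (last ord0 p) = s6_out k].
Proof.
move=> [e_sym _] f_inj f_adj [v v_out] f_out c [c_uniq c_all c_big c_cycle].
have c_sub := hc_edge_sub e_sym c_uniq c_all c_cycle.
have E_sym : symmetric (relpre f (hc_edge c)) by move=> a b; apply: hc_edge_sym.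
have E_sub : subrel (relpre f (hc_edge c)) s6_adj by move=> a b /c_sub; rewrite f_adj.
have E_eq a : ~~ s6_terminal a -> #|relpre f (hc_edge c) a| = 2.
  move=> a_inner; apply: (card_relpre_hc_edge_eq c_uniq c_all c_big f_inj) => w a_w.
  by apply: contraR a_inner => w_out; apply: f_out w_out (c_sub _ _ a_w).
have [[A [a [Aa A_closed]]] | [p [p_uniq p_size Ep p_ends]]] :=
  s6_linkage E_sym E_sub (card_relpre_hc_edge_le c_uniq c_all c_big f_inj) E_eq.
  by case/negP: v_out; apply: (relpre_hc_edge_closed_surj c_uniq c_all c_big f_inj Aa A_closed).
by exists p; split.
Qed.
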